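(* Let $n\ge 1$ and let $A$ be a $2n\times 2n$ real symmetric positive definite matrix, written in block form $A=\begin{pmatrix} A_{11} & A_{12}\\ A_{12}^T & A_{22}\end{pmatrix}$ with $n\times n$ blocks. Let $\Delta_{11},\Delta_{22}\in\mathbb{R}^n$ be the vectors of diagonal entries of $A_{11}$ and $A_{22}$ (their entries are positive), and set $\Delta_{\mathrm{s}}(A)\coloneqq\sqrt{\Delta_{11}\cdot\Delta_{22}}$ (entrywise product and square root). Define the $2n\times 2n$ diagonal matrix $$M\coloneqq \operatorname{diag}\!\left(\sqrt[4]{\Delta_{11}^{-1}\cdot\Delta_{22}}\right)\oplus \operatorname{diag}\!\left(\sqrt[4]{\Delta_{11}\cdot\Delta_{22}^{-1}}\right),$$ where all operations on vectors are entrywise. Then $M$ is symplectic, and $\Delta_{\mathrm{s}}(A)\prec d_{\mathrm{s}}(A)$ holds if and only if $MAM$ is orthosymplectically diagonalizable in the sense of Williamson's theorem.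
   Context: Let $J_{2n}=\begin{pmatrix}0 & I_n\\ -I_n & 0\end{pmatrix}$. A $2n\times 2n$ real matrix $S$ is symplectic if $S^TJ_{2n}S=J_{2n}$; $S$ is orthosymplectic if it is symplectic and orthogonal ($S^TS=I_{2n}$). Williamson's theorem: for every $2n\times 2n$ real symmetric positive definite matrix $B$ there is a symplectic $S$ with $S^TBS=\begin{pmatrix} D&0\\0&D\end{pmatrix}$, where $D$ is an $n\times n$ diagonal matrix with positive diagonal entries; these diagonal entries, which are uniquely determined up to order, are the symplectic eigenvalues of $B$, and $d_{\mathrm{s}}(B)\in\mathbb{R}^n$ denotes the vector of symplectic eigenvalues $d_1(B)\le\cdots\le d_n(B)$. $B$ is called orthosymplectically diagonalizable in the sense of Williamson's theorem if such an $S$ can be chosen orthosymplectic. For $x\in\mathbb{R}^n$ write $x^\uparrow_1\le\cdots\le x^\uparrow_n$ for its entries in increasing order. For $x,y\in\mathbb{R}^n$, $x$ is majorized by $y$, written $x\prec y$, if $\sum_{i=1}^k x^\uparrow_i\ge\sum_{i=1}^k y^\uparrow_i$ for $k=1,\dots,n$, with equality for $k=n$. $\operatorname{diag}(x)$ is the diagonal matrix with diagonal $x$, and $\oplus$ denotes the usual block-diagonal direct sum. *)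

From HB Require Import structures.
From mathcomp Require Import all_boot all_order all_algebra.
From mathcomp Require Import reals.
Set Implicit Arguments. Unset Strict Implicit. Unset Printing Implicit Defensive.
Import Order.TTheory GRing.Theory Num.Theory.
Local Open Scope ring_scope.

Section Defs.
Variable R : realType.

Definition Jmx (n : nat) : 'M[R]_(n + n) :=
  block_mx 0 1%:M (- 1%:M) 0.

Definition symplectic (n : nat) (S : 'M[R]_(n + n)) : Prop :=
  S^T *m Jmx n *m S = Jmx n.

Definition orthogonal_mx (m : nat) (S : 'M[R]_m) : Prop :=
  S^T *m S = 1%:M.

Definition orthosymplectic (n : nat) (S : 'M[R]_(n + n)) : Prop :=
  symplectic S /\ orthogonal_mx S.

Definition sym_posdef (m : nat) (B : 'M[R]_m) : Prop :=
  B^T = B /\ forall x : 'cV[R]_m, x != 0 -> 0 < (x^T *m B *m x) 0 0.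

Definition dbl_diag (n : nat) (d : 'rV[R]_n) : 'M[R]_(n + n) :=
  block_mx (diag_mx d) 0 0 (diag_mx d).

(* d is a vector of symplectic eigenvalues of B (Williamson's theorem),
   in some order: positive entries and S^T B S = diag(d) (+) diag(d)
   for some symplectic S. *)
Definition symp_eigvals (n : nat) (B : 'M[R]_(n + n)) (d : 'rV[R]_n) : Prop :=
  (forall i, 0 < d 0 i) /\
  exists S : 'M[R]_(n + n), symplectic S /\ S^T *m B *m S = dbl_diag d.

Definition orthosymp_diagonalizable (n : nat) (B : 'M[R]_(n + n)) : Prop :=
  exists S : 'M[R]_(n + n), exists D : 'rV[R]_n,
    orthosymplectic S /\ (forall i, 0 < D 0 i) /\ S^T *m B *m S = dbl_diag D.

Definition sorted_up (n : nat) (x : 'rV[R]_n) : seq R :=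
  sort <=%R [seq x 0 i | i <- enum 'I_n].

(* x is majorized by y (increasing-order convention of the paper) *)
Definition majorized (n : nat) (x y : 'rV[R]_n) : Prop :=
  (forall k, (k <= n)%N ->
     \sum_(i < k) nth 0 (sorted_up y) i <= \sum_(i < k) nth 0 (sorted_up x) i) /\
  \sum_(i < n) nth 0 (sorted_up x) i = \sum_(i < n) nth 0 (sorted_up y) i.

Definition Delta11 (n : nat) (A : 'M[R]_(n + n)) : 'rV[R]_n :=
  \row_i A (lshift n i) (lshift n i).
Definition Delta22 (n : nat) (A : 'M[R]_(n + n)) : 'rV[R]_n :=
  \row_i A (rshift n i) (rshift n i).

Definition Delta_s (n : nat) (A : 'M[R]_(n + n)) : 'rV[R]_n :=
  \row_i Num.sqrt (Delta11 A 0 i * Delta22 A 0 i).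

Definition root4 (x : R) : R := Num.sqrt (Num.sqrt x).

Definition Mmx (n : nat) (A : 'M[R]_(n + n)) : 'M[R]_(n + n) :=
  block_mx
    (diag_mx (\row_i root4 ((Delta11 A 0 i)^-1 * Delta22 A 0 i))) 0
    0 (diag_mx (\row_i root4 (Delta11 A 0 i * (Delta22 A 0 i)^-1))).

End Defs.

(* Put B = M A M.  As M is diagonal and symplectic, the diagonals of both
   blocks of B equal Delta_s(A) and B has the symplectic eigenvalues d of A.
   Write B = Q (D (+) D) Q^T with Q symplectic and D = diag d.  The columns
   q_j, q_(n+j) of Q satisfy <q_j, J q_(n+j)> = 1 and |J q_(n+j)| = |q_(n+j)|,
   so tr B = sum_j d_j (|q_j|^2 + |q_(n+j)|^2) = 2 sum_j d_j
   + sum_j d_j |q_j - J q_(n+j)|^2.  If Delta_s(A) is majorized by d the traces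
   agree, hence q_j = J q_(n+j) for all j, and this forces Q to be orthogonal.
   Conversely, if B = O (D' (+) D') O^T with O orthosymplectic, Schur's argument
   shows that the common diagonal Delta_s(A) of the blocks of B is a doubly
   stochastic average of D', hence majorized by D'; and D' is a rearrangement
   of d because the symplectic spectrum is determined by the characteristic
   polynomial of (J B)^2. *)

From HB Require Import structures.
From mathcomp Require Import all_boot all_order all_algebra.
From mathcomp Require Import reals.
From mathcomp Require Import zify ring lra.
Import Order.TTheory GRing.Theory Num.Theory.
Local Open Scope ring_scope.
Set Implicit Arguments. Unset Strict Implicit.

Lemma perm_eq_cat_self (T : eqType) (s t : seq T) :
  perm_eq (s ++ s) (t ++ t) -> perm_eq s t.
Proof.
move=> /permP hst; apply/permP => a.
by have := hst a; rewrite !count_cat !addnn => /double_inj.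
Qed.

Section CharPoly.
Variable R : realType.

Lemma char_poly_conj m (S P K : 'M[R]_m) :
  S *m P = 1%:M -> char_poly (S *m K *m P) = char_poly K.
Proof.
move=> hSP; rewrite /char_poly /char_poly_mx.
have hX : ('X%:M : 'M[{poly R}]_m) = map_mx polyC S *m 'X%:M *m map_mx polyC P.
  by rewrite mul_mx_scalar -scalemxAl -map_mxM hSP map_mx1 scalemx1.
rewrite {1}hX !map_mxM -!mulmxA -mulmxBr -mulmxBl !det_mulmx mulrCA -det_mulmx.
by rewrite -map_mxM hSP map_mx1 det1 mulr1.
Qed.

Definition entries m (x : 'rV[R]_m) := [seq x 0 i | i <- enum 'I_m].

Lemma char_poly_diag m (x : 'rV[R]_m) :
  char_poly (diag_mx x) = \prod_i ('X - (x 0 i)%:P).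
Proof.
rewrite char_poly_trig ?diag_mx_is_trig //.
by apply: eq_bigr => i _; rewrite mxE eqxx mulr1n.
Qed.

End CharPoly.

Section Symplectic.
Variables (R : realType) (n : nat).
Local Notation J := (Jmx R n).
Implicit Types (S T X E : 'M[R]_(n + n)) (d : 'rV[R]_n).

Lemma trJ : J^T = - J.
Proof.
rewrite /Jmx tr_block_mx !trmx0 raddfN /= !trmx1.
by rewrite opp_block_mx !oppr0 opprK.
Qed.

Lemma mulJJ : J *m J = - 1%:M.
Proof.
rewrite /Jmx mulmx_block !mulmx0 !mul0mx !addr0 !add0r mulmx1 mulmxN mulmx1.
by rewrite (scalar_mx_block n n (1 : R)) opp_block_mx oppr0.
Qed.

Lemma trJ_mulJ : J^T *m J = 1%:M.
Proof. by rewrite trJ mulNmx mulJJ opprK. Qed.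

Lemma mulJ_trJ : J *m J^T = 1%:M.
Proof. by rewrite trJ mulmxN mulJJ opprK. Qed.

Definition sympinv S := - (J *m S^T *m J).

Lemma mul_sympinv_l S : symplectic S -> sympinv S *m S = 1%:M.
Proof. by move=> hS; rewrite /sympinv mulNmx -!mulmxA (mulmxA S^T) hS mulJJ opprK. Qed.

Lemma mul_sympinv_r S : symplectic S -> S *m sympinv S = 1%:M.
Proof. by move=> hS; apply/mulmx1C/mul_sympinv_l. Qed.

Lemma mulJ_tr_sympinv S : J *m (sympinv S)^T = S *m J.
Proof.
rewrite /sympinv raddfN /= !trmx_mul trmxK trJ.
by rewrite ?(mulmxN, mulNmx, opprK) !mulmxA mulJJ !mulNmx opprK mul1mx.
Qed.

Lemma symplectic_congr_inv S X E : symplectic S -> S^T *m X *m S = E ->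
  X = (sympinv S)^T *m E *m sympinv S.
Proof.
move=> hS <-; rewrite !mulmxA -trmx_mul -mulmxA -mulmxA mul_sympinv_r // mulmx1.
by rewrite trmx1 mul1mx.
Qed.

Lemma symplecticM S T : symplectic S -> symplectic T -> symplectic (S *m T).
Proof.
move=> hS hT; rewrite /symplectic trmx_mul -!mulmxA (mulmxA S^T).
by rewrite (mulmxA (S^T *m J)) hS mulmxA hT.
Qed.

Lemma symplectic_sympinv S : symplectic S -> symplectic (sympinv S).
Proof. by move=> hS; rewrite /symplectic -(symplectic_congr_inv hS hS). Qed.

Lemma symplectic_tr S : symplectic S -> symplectic S^T.
Proof.
move=> hS; have := mul_sympinv_r hS.
rewrite /sympinv mulmxN !mulmxA => /(canRL (@opprK _)) hSJ.
by rewrite /symplectic trmxK -[LHS]mulmx1 -mulJ_trJ mulmxA hSJ mulNmx mul1mx trJ opprK.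
Qed.

Lemma mulJ_dbl_diag_sq d :
  (J *m dbl_diag d) *m (J *m dbl_diag d) = dbl_diag (\row_i - d 0 i ^+ 2).
Proof.
rewrite /Jmx /dbl_diag !mulmx_block.
rewrite ?(mulmx0, mul0mx, mul1mx, mulNmx, mulmxN, addr0, add0r, oppr0) mulmx_diag.
by congr block_mx; rewrite -raddfN; congr diag_mx; apply/rowP => i; rewrite !mxE expr2.
Qed.

End Symplectic.

Section SymplecticEigenvalues.
Variables (R : realType) (n : nat).
Local Notation J := (Jmx R n).
Implicit Types (S X E : 'M[R]_(n + n)) (d : 'rV[R]_n).

Lemma char_poly_JX_sq_congr S X E : symplectic S -> S^T *m X *m S = E ->
  char_poly ((J *m X) *m (J *m X)) = char_poly ((J *m E) *m (J *m E)).
Proof.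
move=> hS hE; rewrite (symplectic_congr_inv hS hE).
have -> : J *m ((sympinv S)^T *m E *m sympinv S) = S *m (J *m E) *m sympinv S.
  by rewrite !mulmxA mulJ_tr_sympinv.
have -> : S *m (J *m E) *m sympinv S *m (S *m (J *m E) *m sympinv S) =
    S *m ((J *m E) *m (J *m E)) *m sympinv S.
  by rewrite -!mulmxA (mulmxA (sympinv S)) mul_sympinv_l // mul1mx.
by apply: char_poly_conj; exact: mul_sympinv_r.
Qed.

Lemma char_poly_dbl_diag d :
  char_poly (dbl_diag d) = \prod_(a <- entries d ++ entries d) ('X - a%:P).
Proof.
rewrite /dbl_diag -diag_mx_row char_poly_diag big_split_ord big_cat !big_map.
by congr (_ * _); apply: eq_bigr => i _; rewrite ?row_mxEl ?row_mxEr.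
Qed.

Lemma symp_eigvals_perm_eq X d d' :
  symp_eigvals X d -> symp_eigvals X d' -> perm_eq (entries d) (entries d').
Proof.
move=> [d_gt0 [S [hS eS]]] [d'_gt0 [S' [hS' eS']]].
have := char_poly_JX_sq_congr hS eS; rewrite (char_poly_JX_sq_congr hS' eS').
rewrite !mulJ_dbl_diag_sq !char_poly_dbl_diag => /esym/Pdiv.Field.prod_XsubC_eq.
move=> /perm_eq_cat_self/(perm_map (fun y => Num.sqrt (- y))).
have entriesE (x : 'rV[R]_n) : (forall i, 0 < x 0 i) ->
    entries x = map (fun y => Num.sqrt (- y)) (entries (\row_i - x 0 i ^+ 2)).
  move=> x_gt0; rewrite /entries -[in RHS]map_comp; apply: eq_map => i /=.
  by rewrite mxE opprK sqrtr_sqr gtr0_norm.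
by rewrite -!entriesE.
Qed.

End SymplecticEigenvalues.

Section Majorization.
Variable R : realType.

Lemma sum_nth_take (s : seq R) k : (k <= size s)%N ->
  \sum_(i < k) s`_i = \sum_(a <- take k s) a.
Proof.
move=> ks; rewrite (big_nth 0) big_mkord size_takel //.
by apply: eq_bigr => i _; rewrite nth_take.
Qed.

Lemma sum_take_le_weighted (I : eqType) (f w : I -> R) (s : seq I) k :
  sorted <=%R (map f s) -> (forall i, 0 <= w i <= 1) ->
  \sum_(i <- s) w i = k%:R -> (k <= size s)%N ->
  \sum_(i <- take k s) f i <= \sum_(i <- s) w i * f i.
Proof.
move=> sorted_fs w01 sum_w ks.
have ks' : (k <= size (map f s))%N by rewrite size_map.
have le_nth i j : (i <= j < size s)%N -> (map f s)`_i <= (map f s)`_j.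
  move=> /andP [ij js]; apply: (sorted_leq_nth le_trans lexx 0 sorted_fs) => //;
    rewrite inE size_map; lia.
(* [c] separates the values of [f] on [take k s] from those on [drop k s], and
   [w] minus the indicator of [take k s] has total weight 0. *)
pose c := (map f s)`_k.-1.
have le_c a : a \in take k s -> f a <= c.
  move=> /(map_f f); rewrite map_take => /(nthP 0) [i]; rewrite size_takel // => ik <-.
  by rewrite nth_take // le_nth //; lia.
have ge_c b : b \in drop k s -> c <= f b.
  move=> /(map_f f); rewrite map_drop => /(nthP 0) [j]; rewrite size_drop size_map => jk <-.
  by rewrite nth_drop le_nth //; lia.
have sum_c : \sum_(i <- take k s) (w i - 1) * c + \sum_(i <- drop k s) w i * c = 0.
  move: sum_w; rewrite -{1}(cat_take_drop k s) big_cat /= => sum_w.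
  rewrite -!mulr_suml -mulrDl sumrB addrAC sum_w.
  by rewrite big_const_seq count_predT size_takel // iter_addr addr0 subrr mul0r.
have le_sum : \sum_(i <- take k s) (w i - 1) * c + \sum_(i <- drop k s) w i * c <=
       \sum_(i <- take k s) (w i - 1) * f i + \sum_(i <- drop k s) w i * f i.
  apply: lerD; rewrite big_seq_cond [X in _ <= X]big_seq_cond; apply: ler_sum => i /andP [si _].
  - by apply: ler_wnM2l; [rewrite subr_le0; case/andP: (w01 i) | exact: le_c].
  - by apply: ler_wpM2l; [case/andP: (w01 i) | exact: ge_c].
rewrite sum_c (eq_bigr (fun i => w i * f i - f i)) ?sumrB in le_sum; last first.
  by move=> i _; rewrite mulrBl mul1r.
rewrite -[in X in _ <= X](cat_take_drop k s) big_cat /=; lra.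
Qed.

Definition argsort m (x : 'rV[R]_m) := sort (relpre (x 0) <=%R) (enum 'I_m).

Lemma perm_argsort m (x : 'rV[R]_m) : perm_eq (argsort x) (enum 'I_m).
Proof. exact: permEl (perm_sort _ _). Qed.

Lemma sorted_upE m (x : 'rV[R]_m) : sorted_up x = map (x 0) (argsort x).
Proof. exact: sort_map. Qed.

Lemma sum_sorted_up_take m (x : 'rV[R]_m) k : (k <= m)%N ->
  \sum_(i < k) (sorted_up x)`_i = \sum_(j <- take k (argsort x)) x 0 j.
Proof.
move=> km; rewrite sum_nth_take ?sorted_upE ?size_map ?size_sort ?size_enum_ord //.
by rewrite -map_take big_map.
Qed.

Lemma sum_sorted_up m (x : 'rV[R]_m) : \sum_(i < m) (sorted_up x)`_i = \sum_i x 0 i.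
Proof.
rewrite sum_sorted_up_take // take_oversize ?size_sort ?size_enum_ord //.
by rewrite (perm_big _ (perm_argsort x)) big_enum.
Qed.

Lemma majorized_sum m (x y : 'rV[R]_m) : majorized x y -> \sum_i x 0 i = \sum_i y 0 i.
Proof. by case=> _; rewrite !sum_sorted_up. Qed.

Lemma majorized_perm_eq m (x y y' : 'rV[R]_m) :
  perm_eq (entries y) (entries y') -> majorized x y -> majorized x y'.
Proof.
by move=> /(perm_sortP le_total le_trans le_anti) yy'; rewrite /majorized /sorted_up yy'.
Qed.

Lemma sum_sorted_up_le_weighted m (x : 'rV[R]_m) (w : 'I_m -> R) k :
  (forall j, 0 <= w j <= 1) -> \sum_j w j = k%:R -> (k <= m)%N ->
  \sum_(i < k) (sorted_up x)`_i <= \sum_j w j * x 0 j.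
Proof.
move=> w01 sum_w km; rewrite sum_sorted_up_take // -big_enum /= -(perm_big _ (perm_argsort x)).
apply: sum_take_le_weighted => //.
- by rewrite -sorted_upE; exact: sort_sorted le_total _.
- by rewrite (perm_big _ (perm_argsort x)) big_enum.
- by rewrite size_sort size_enum_ord.
Qed.

Lemma majorized_doubly_stochastic m (x d : 'rV[R]_m) (W : 'M[R]_m) :
  (forall i j, 0 <= W i j) -> (forall i, \sum_j W i j = 1) ->
  (forall j, \sum_i W i j = 1) ->
  (forall i, x 0 i = \sum_j W i j * d 0 j) -> majorized x d.
Proof.
move=> W_ge0 W_row W_col xE.
have sum_xE (s : seq 'I_m) :
    \sum_(i <- s) x 0 i = \sum_j (\sum_(i <- s) W i j) * d 0 j.
  rewrite (eq_bigr _ (fun i _ => xE i)) exchange_big /=.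
  by apply: eq_bigr => j _; rewrite mulr_suml.
split=> [k km|]; last first.
  rewrite !sum_sorted_up -big_enum /= sum_xE.
  by apply: eq_bigr => j _; rewrite big_enum W_col mul1r.
set K := take k (argsort x).
have K_uniq : uniq K by rewrite take_uniq // sort_uniq enum_uniq.
have K_size : size K = k by rewrite size_takel // size_sort size_enum_ord.
rewrite [X in _ <= X]sum_sorted_up_take // sum_xE; apply: sum_sorted_up_le_weighted => //.
- move=> j; rewrite sumr_ge0 //= (big_uniq _ K_uniq) -(W_col j).
  by rewrite [X in _ <= X](bigID (mem K)) /= lerDl sumr_ge0.
- rewrite exchange_big /=; under eq_bigr do rewrite W_row.
  by rewrite big_const_seq count_predT K_size iter_addr addr0.
Qed.

End Majorization.

Section OrthogonalCongruence.
Variables (R : realType) (n : nat).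
Local Notation J := (Jmx R n).
Implicit Types (Q O B : 'M[R]_(n + n)) (d x : 'rV[R]_n).

Lemma sum_split_lr (F : 'I_(n + n) -> R) :
  \sum_k F k = \sum_j (F (lshift n j) + F (rshift n j)).
Proof. by rewrite big_split_ord big_split. Qed.

Lemma mulmx_trE m p q (X : 'M[R]_(m, p)) (Y : 'M[R]_(q, p)) i j :
  (X *m Y^T) i j = \sum_k X i k * Y j k.
Proof. by rewrite mxE; apply: eq_bigr => k _; rewrite mxE. Qed.

Lemma trmx_mulE m p q (X : 'M[R]_(p, m)) (Y : 'M[R]_(p, q)) i j :
  (X^T *m Y) i j = \sum_k X k i * Y k j.
Proof. by rewrite mxE; apply: eq_bigr => k _; rewrite mxE. Qed.

Lemma mul_mx_diagE m p (X : 'M[R]_(m, p)) (v : 'rV[R]_p) i j :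
  (X *m diag_mx v) i j = X i j * v 0 j.
Proof. by rewrite mul_mx_diag mxE. Qed.

Lemma mulmx_tr_diagE O r :
  (O *m O^T) r r = \sum_j (O r (lshift n j) ^+ 2 + O r (rshift n j) ^+ 2).
Proof. by rewrite mulmx_trE sum_split_lr; apply: eq_bigr => j _; rewrite !expr2. Qed.

Lemma trmx_mul_diagE O r :
  (O^T *m O) r r = \sum_i (O (lshift n i) r ^+ 2 + O (rshift n i) r ^+ 2).
Proof. by rewrite trmx_mulE sum_split_lr; apply: eq_bigr => j _; rewrite !expr2. Qed.

Lemma dbl_diag_conj_diagE O d r :
  (O *m dbl_diag d *m O^T) r r =
  \sum_j d 0 j * (O r (lshift n j) ^+ 2 + O r (rshift n j) ^+ 2).
Proof.
rewrite mulmx_trE /dbl_diag -diag_mx_row sum_split_lr; apply: eq_bigr => j _.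
by rewrite !mul_mx_diagE row_mxEl row_mxEr; ring.
Qed.

Lemma majorized_orthogonal_dbl_diag B O x d :
  orthogonal_mx O -> O^T *m B *m O = dbl_diag d ->
  (forall i, B (lshift n i) (lshift n i) = x 0 i) ->
  (forall i, B (rshift n i) (rshift n i) = x 0 i) ->
  majorized x d.
Proof.
move=> hO hB Bl Br.
have hO' : O *m O^T = 1%:M by apply: mulmx1C.
have BE : B = O *m dbl_diag d *m O^T.
  by rewrite -hB !mulmxA hO' mul1mx -mulmxA hO' mulmx1.
(* Schur's doubly stochastic matrix (O_kl^2) of the 2n x 2n matrix O, with
   the two blocks of indices merged. *)
pose W := \matrix_(i, j) ((O (lshift n i) (lshift n j) ^+ 2 +
   O (lshift n i) (rshift n j) ^+ 2 + O (rshift n i) (lshift n j) ^+ 2 +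
   O (rshift n i) (rshift n j) ^+ 2) / 2).
have one_diag (X : 'M[R]_(n + n)) i : X = 1%:M ->
    X (lshift n i) (lshift n i) + X (rshift n i) (rshift n i) = 2.
  by move=> ->; rewrite !mxE !eqxx.
apply: (@majorized_doubly_stochastic R n x d W).
- by move=> i j; rewrite mxE divr_ge0 // !addr_ge0 // sqr_ge0.
- move=> i; transitivity (((O *m O^T) (lshift n i) (lshift n i) +
                          (O *m O^T) (rshift n i) (rshift n i)) / 2).
    rewrite !mulmx_tr_diagE -big_split mulr_suml.
    by apply: eq_bigr => j _; rewrite mxE /=; ring.
  by rewrite one_diag // divff // pnatr_eq0.
- move=> j; transitivity (((O^T *m O) (lshift n j) (lshift n j) +
                          (O^T *m O) (rshift n j) (rshift n j)) / 2).
    rewrite !trmx_mul_diagE -big_split mulr_suml.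
    by apply: eq_bigr => i _; rewrite mxE /=; ring.
  by rewrite one_diag // divff // pnatr_eq0.
- move=> i; transitivity ((B (lshift n i) (lshift n i) + B (rshift n i) (rshift n i)) / 2).
    by rewrite Bl Br; field.
  rewrite BE !dbl_diag_conj_diagE -big_split mulr_suml.
  by apply: eq_bigr => j _; rewrite mxE /=; ring.
Qed.

Lemma mxtrace_dbl_diag_conj Q d :
  \tr (Q *m dbl_diag d *m Q^T) = \sum_j d 0 j *
    ((Q^T *m Q) (lshift n j) (lshift n j) + (Q^T *m Q) (rshift n j) (rshift n j)).
Proof.
rewrite mxtrace_mulC mulmxA /mxtrace sum_split_lr /dbl_diag -diag_mx_row.
by apply: eq_bigr => j _; rewrite !mul_mx_diagE row_mxEl row_mxEr /=; ring.
Qed.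

Lemma Jmx_lr j : J (lshift n j) (rshift n j) = 1.
Proof. by rewrite /Jmx block_mxEur mxE eqxx. Qed.

Lemma symplectic_col_dist Q j : symplectic Q ->
  \sum_k (Q k (lshift n j) - (J *m Q) k (rshift n j)) ^+ 2 =
  (Q^T *m Q) (lshift n j) (lshift n j) + (Q^T *m Q) (rshift n j) (rshift n j) - 2.
Proof.
move=> hQ.
have JQ : (J *m Q)^T *m (J *m Q) = Q^T *m Q.
  by rewrite trmx_mul -mulmxA (mulmxA J^T) trJ_mulJ mul1mx.
transitivity (\sum_k Q k (lshift n j) * Q k (lshift n j) +
  \sum_k (J *m Q) k (rshift n j) * (J *m Q) k (rshift n j) -
  2 * \sum_k Q k (lshift n j) * (J *m Q) k (rshift n j)).
  by rewrite mulr_sumr -big_split -sumrB /=; apply: eq_bigr => k _; ring.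
by rewrite -!trmx_mulE JQ mulmxA hQ Jmx_lr mulr1.
Qed.

Lemma orthogonal_symplectic_lsubmx Q :
  symplectic Q -> lsubmx Q = J *m rsubmx Q -> orthogonal_mx Q.
Proof.
move=> hQ lQ; move: hQ; rewrite /symplectic /orthogonal_mx -[Q]hsubmxK lQ.
set N := rsubmx Q; rewrite tr_row_mx mul_col_mx !mul_col_row {3}/Jmx.
move=> /eq_block_mx [_ NN _ NJN].
have NtN : N^T *m N = 1%:M.
  by rewrite -NN trmx_mul -!mulmxA (mulmxA J^T) trJ_mulJ mul1mx.
rewrite (scalar_mx_block n n 1); congr block_mx => //.
- by rewrite trmx_mul -mulmxA (mulmxA J^T) trJ_mulJ mul1mx.
- by rewrite trmx_mul trJ mulmxN mulNmx NJN oppr0.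
- by rewrite mulmxA.
Qed.

Lemma orthogonal_symplectic_trace Q d : (forall i, 0 < d 0 i) -> symplectic Q ->
  \tr (Q *m dbl_diag d *m Q^T) = 2 * \sum_i d 0 i -> orthogonal_mx Q.
Proof.
move=> d_gt0 hQ; rewrite mxtrace_dbl_diag_conj => htr.
apply: (orthogonal_symplectic_lsubmx hQ).
pose dist j := \sum_k (Q k (lshift n j) - (J *m Q) k (rshift n j)) ^+ 2.
have sum_dist : \sum_j d 0 j * dist j = 0.
  under eq_bigr do rewrite /dist (symplectic_col_dist _ hQ) mulrBr.
  by rewrite sumrB htr -mulr_suml mulrC subrr.
apply/matrixP => k j; rewrite mulmx_rsub [lsubmx _ _ _]mxE [rsubmx _ _ _]mxE.
apply/eqP; rewrite -subr_eq0 -sqrf_eq0; apply/eqP.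
have /eqP : d 0 j * dist j = 0.
  apply: (psumr_eq0P _ sum_dist) => // i _.
  by apply: mulr_ge0; [exact: ltW | apply: sumr_ge0 => l _; exact: sqr_ge0].
rewrite mulf_eq0 gt_eqF //= => /eqP /psumr_eq0P; apply=> // l _; exact: sqr_ge0.
Qed.

End OrthogonalCongruence.

Section Normalization.
Variable R : realType.

Lemma sym_posdef_diag_gt0 m (B : 'M[R]_m) r : sym_posdef B -> 0 < B r r.
Proof.
case=> _ /(_ (delta_mx r 0)); rewrite trmx_delta -rowE -colE !mxE.
apply; apply: contraTneq isT => /(congr1 (fun X : 'cV_m => X r 0)).
by rewrite !mxE !eqxx => /eqP; rewrite oner_eq0.
Qed.

Lemma root4M (x y : R) : 0 <= x -> root4 x * root4 y = root4 (x * y).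
Proof. by move=> x_ge0; rewrite /root4 -sqrtrM ?sqrtr_ge0 // -sqrtrM. Qed.

Lemma root4_sqr (x : R) : 0 <= x -> root4 x ^+ 2 = Num.sqrt x.
Proof. by move=> x_ge0; rewrite /root4 sqr_sqrtr // sqrtr_ge0. Qed.

Lemma sqrt_invM_mul (a b : R) : 0 < a -> 0 <= b ->
  Num.sqrt (a^-1 * b) * a = Num.sqrt (a * b).
Proof.
move=> a_gt0 b_ge0; rewrite -{2}(gtr0_norm a_gt0) -sqrtr_sqr -sqrtrM.
  by congr Num.sqrt; field; rewrite gt_eqF.
by rewrite mulr_ge0 // invr_ge0 ltW.
Qed.

Variables (n : nat) (A : 'M[R]_(n + n)).
Hypothesis A_pd : sym_posdef A.
Local Notation a i := (Delta11 A 0 i).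
Local Notation b i := (Delta22 A 0 i).

Lemma Delta11_gt0 i : 0 < a i.
Proof. by rewrite mxE; apply: sym_posdef_diag_gt0. Qed.

Lemma Delta22_gt0 i : 0 < b i.
Proof. by rewrite mxE; apply: sym_posdef_diag_gt0. Qed.

Lemma Mmx_tr : (Mmx A)^T = Mmx A.
Proof. by rewrite /Mmx -diag_mx_row tr_diag_mx. Qed.

Lemma Mmx_symplectic : symplectic (Mmx A).
Proof.
have r1r2 : diag_mx (\row_i root4 ((a i)^-1 * b i)) *m
            diag_mx (\row_i root4 (a i * (b i)^-1)) = 1%:M.
  rewrite mulmx_diag -diag_const_mx; congr diag_mx; apply/rowP => i.
  have a_gt0 := Delta11_gt0 i; have b_gt0 := Delta22_gt0 i.
  rewrite !mxE in a_gt0 b_gt0 *.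
  rewrite root4M ?mulr_ge0 ?invr_ge0 ?ltW // mulrACA mulVf ?mulfV ?gt_eqF //.
  by rewrite mulr1 /root4 !sqrtr1.
rewrite /symplectic Mmx_tr /Mmx /Jmx !mulmx_block.
rewrite ?(mulmx0, mul0mx, mulmx1, mulmxN, mulNmx, addr0, add0r, oppr0).
by rewrite r1r2 diag_mxC r1r2.
Qed.

Lemma Mmx_conj_lshift i :
  (Mmx A *m A *m Mmx A) (lshift n i) (lshift n i) = Delta_s A 0 i.
Proof.
have a_gt0 := Delta11_gt0 i; have b_gt0 := Delta22_gt0 i.
rewrite !mxE in a_gt0 b_gt0.
rewrite /Mmx -diag_mx_row mul_mx_diagE mul_diag_mx mxE row_mxEl [Delta_s _ _ _]mxE.
rewrite mulrAC -expr2 !mxE root4_sqr ?mulr_ge0 ?invr_ge0 ?ltW //.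
by rewrite sqrt_invM_mul // ltW.
Qed.

Lemma Mmx_conj_rshift i :
  (Mmx A *m A *m Mmx A) (rshift n i) (rshift n i) = Delta_s A 0 i.
Proof.
have a_gt0 := Delta11_gt0 i; have b_gt0 := Delta22_gt0 i.
rewrite !mxE in a_gt0 b_gt0.
rewrite /Mmx -diag_mx_row mul_mx_diagE mul_diag_mx mxE row_mxEr [Delta_s _ _ _]mxE.
rewrite mulrAC -expr2 !mxE root4_sqr ?mulr_ge0 ?invr_ge0 ?ltW //.
by rewrite [_ / _]mulrC sqrt_invM_mul ?ltW // mulrC.
Qed.

End Normalization.

Unset Implicit Arguments.
Set Strict Implicit.

Theorem theorem1p1 (R : realType) (n : nat) (A : 'M[R]_(n + n)) :
  (0 < n)%N -> sym_posdef A ->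
  symplectic (Mmx A) /\
  (forall d : 'rV[R]_n, symp_eigvals A d ->
     (majorized (Delta_s A) d <->
      orthosymp_diagonalizable (Mmx A *m A *m Mmx A))).
Proof.
move=> _ A_pd; split=> [|d eig_d]; first exact: Mmx_symplectic.
have [d_gt0 [S [hS eS]]] := eig_d.
set M := Mmx A.
have [Q hQ BE] : exists2 Q, symplectic Q & M *m A *m M = Q *m dbl_diag d *m Q^T.
  exists (M *m (sympinv S)^T).
    exact: symplecticM (Mmx_symplectic A_pd) (symplectic_tr (symplectic_sympinv hS)).
  by rewrite (symplectic_congr_inv hS eS) trmx_mul trmxK Mmx_tr // !mulmxA.
split=> [maj | [T [D [[hT oT] [D_gt0 eT]]]]].
- have oQ : orthogonal_mx Q.
    apply: (orthogonal_symplectic_trace d_gt0 hQ); rewrite -BE /mxtrace sum_split_lr.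
    under eq_bigr do rewrite Mmx_conj_lshift // Mmx_conj_rshift //.
    by rewrite big_split /= (majorized_sum maj) mulr2n mulrDl mul1r.
  exists Q, d; do !split => //.
  by rewrite BE !mulmxA oQ mul1mx -mulmxA oQ mulmx1.
- apply: (majorized_perm_eq _ (majorized_orthogonal_dbl_diag oT eT
            (Mmx_conj_lshift A_pd) (Mmx_conj_rshift A_pd))).
  apply: (symp_eigvals_perm_eq _ eig_d); split=> //; exists (M *m T); split.
    exact: symplecticM (Mmx_symplectic A_pd) hT.
  by rewrite trmx_mul Mmx_tr // -eT !mulmxA.
Qed.
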